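(* Let $W\in\mathbb{D}_n$ with $\mathcal{E}=\{1,\dots,m\}$ and $|\mathcal{I}|=k\ge1$, $m+k=n$, satisfying the Ground Assumption. Let $W'\in\mathbb{D}_{m+1}$ be a Dale matrix with excitatory set $\{1,\dots,m\}$ and inhibitory set $\{m+1\}$, such that $W'_{ij}=W_{ij}$ for $i,j\in\mathcal{E}$; for all $i\in\mathcal{E}$, $W'_{i(m+1)}<0$ if and only if the $i$-th row of the submatrix $W_{\mathcal{E}\mathcal{I}}$ (rows $\mathcal{E}$, columns $\mathcal{I}$) is nonzero; and the $(m+1)$-st row of $W'$ is zero. Assume $W'$ satisfies the Ground Assumption. Then $\mathcal{C}(W)=\mathcal{C}(W')$.
   Context: Threshold-linear network: $\dot x_i=-x_i+[\sum_j W_{ij}x_j+b_i]_+$ with $[y]_+=\max(0,y)$; a fixed point is $x^*$ with $x^*=[Wx^*+b]_+$. A Dale matrix $W\in\mathbb{D}_n$ is an $n\times n$ real matrix with a partition $[n]=\mathcal{E}\sqcup\mathcal{I}$ such that $W_{ii}=0$, columns indexed by $\mathcal{E}$ are nonnegative and columns indexed by $\mathcal{I}$ are nonpositive. Ground Assumption: $(I-W)_\sigma$ is nonsingular for every nonempty $\sigma\subset[n]$. Excitatory support: $\mathrm{supp}_+x=\{i\in\mathcal{E}:x_i>0\}$. Combinatorial code: $\mathcal{C}(W)=\{\mathrm{supp}_+x^*: b\in\mathbb{R}^n_{\ge0},\ x^*\in\mathbb{R}^n_{\ge0}\text{ a fixed point of }(W,b)\}$. *)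

From HB Require Import structures.
From mathcomp Require Import all_boot all_order all_algebra.
From mathcomp Require Import reals.
Set Implicit Arguments. Unset Strict Implicit. Unset Printing Implicit Defensive.
Import Order.TTheory GRing.Theory Num.Theory.
Local Open Scope ring_scope.

Section TLN.
Variable R : realType.

Definition is_dale (n : nat) (W : 'M[R]_n) (E : {set 'I_n}) : Prop :=
  [/\ forall i, W i i = 0,
      forall i j, j \in E -> 0 <= W i j
    & forall i j, j \notin E -> W i j <= 0].

Definition principal_submx (n : nat) (A : 'M[R]_n) (s : {set 'I_n})
  : 'M[R]_#|s| := \matrix_(i, j) A (enum_val i) (enum_val j).

Definition ground_assumption (n : nat) (W : 'M[R]_n) : Prop :=
  forall s : {set 'I_n}, s != set0 ->
    \det (principal_submx (1%:M - W) s) != 0.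

Definition is_fixed_point (n : nat) (W : 'M[R]_n) (b x : 'cV[R]_n) : Prop :=
  forall i, x i 0 = Num.max 0 (\sum_j W i j * x j 0 + b i 0).

Definition nonneg_vec (n : nat) (v : 'cV[R]_n) : Prop := forall i, 0 <= v i 0.

(* excitatory indices are the first m indices of 'I_(m+k) *)
Definition exc_set (m k : nat) : {set 'I_(m + k)} := [set lshift k i | i : 'I_m].

Definition supp_plus (m k : nat) (x : 'cV[R]_(m + k)) : {set 'I_m} :=
  [set i : 'I_m | 0 < x (lshift k i) 0].

Definition in_code (m k : nat) (W : 'M[R]_(m + k)) (S : {set 'I_m}) : Prop :=
  exists (b x : 'cV[R]_(m + k)),
    [/\ nonneg_vec b, nonneg_vec x, is_fixed_point W b x & S = supp_plus x].

End TLN.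

(** A nonnegative [x] is a fixed point for some input [b >= 0] exactly when
    [W x <= x], so [S] is in the code iff some [x_E >= 0] with support [S]
    extends to an [x] with [W x <= x].  Giving every inhibitory unit a large
    common activity [M] settles each excitatory row that receives inhibition
    and, inhibitory columns being nonpositive, each inhibitory row.  What
    remains is [W_EE x_E <= x_E] on the uninhibited excitatory rows, and both
    [W_EE] and these rows are the same for [W] and [W']. *)
From HB Require Import structures.
From mathcomp Require Import all_boot all_order all_algebra.
From mathcomp Require Import reals.
From mathcomp Require Import lra.
Import Order.TTheory GRing.Theory Num.Theory.
Local Open Scope ring_scope.

Set Implicit Arguments.

Section FixedPoints.
Variables (R : realType) (n : nat) (W : 'M[R]_n).

Definition subfixed (x : 'cV[R]_n) : Prop :=
  forall i, \sum_j W i j * x j 0 <= x i 0.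

Lemma fixed_point_subfixedP (x : 'cV[R]_n) : nonneg_vec x ->
  (exists2 b, nonneg_vec b & is_fixed_point W b x) <-> subfixed x.
Proof.
move=> x_ge0; split=> [[b b_ge0 fp_x] i | sub_x].
  by rewrite fp_x le_max lerDl b_ge0 orbT.
exists (\col_i (x i 0 - \sum_j W i j * x j 0)) => i; rewrite mxE.
  by rewrite subr_ge0.
by rewrite addrC subrK; apply/esym/max_idPr.
Qed.

End FixedPoints.

Arguments subfixed {R n} W x.

Lemma le_sum_norm {R : realDomainType} {I : finType} (F : I -> R) i :
  F i <= \sum_j `|F j|.
Proof.
rewrite (bigD1 i) //= (le_trans (ler_norm _)) // lerDl.
by apply: sumr_ge0 => j _.
Qed.

Lemma ler_add_nmulr {R : realFieldType} (a c y M : R) :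
  c < 0 -> (y - a) / c <= M -> a + c * M <= y.
Proof.
move=> c_lt0 le_M.
have : c * M <= c * ((y - a) / c) by apply: ler_wnM2l => //; exact: ltW.
by rewrite [c * (_ / c)]mulrC divfK ?lt_eqF //; lra.
Qed.

Lemma rshift_notin_exc_set m k (l : 'I_k) : rshift m l \notin exc_set m k.
Proof.
apply/imsetP => -[j _ /(congr1 val)] /= eq_j.
by have := ltn_ord j; rewrite -eq_j ltnNge leq_addr.
Qed.

Lemma supp_plus_col_mx (R : realType) m k (u : 'cV[R]_m) (v : 'cV[R]_k) :
  supp_plus (col_mx u v) = [set i | 0 < u i 0].
Proof. by apply/setP => i; rewrite !inE col_mxEu. Qed.

Section Code.
Variables (R : realType) (m k : nat) (W : 'M[R]_(m + k)).
Hypothesis W_inh_le0 : forall i (l : 'I_k), W i (rshift m l) <= 0.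

Definition uninhibited (i : 'I_m) : bool := row i (ursubmx W) == 0.

Definition exc_code (A : 'M[R]_m) (P : pred 'I_m) (S : {set 'I_m}) : Prop :=
  exists xE : 'cV[R]_m, [/\ nonneg_vec xE, S = [set i | 0 < xE i 0]
    & forall i, P i -> \sum_j A i j * xE j 0 <= xE i 0].

Lemma sum_mul_col_mx (r : 'I_(m + k) -> R) (u : 'cV[R]_m) (v : 'cV[R]_k) :
  \sum_j r j * col_mx u v j 0 =
  \sum_j r (lshift k j) * u j 0 + \sum_l r (rshift m l) * v l 0.
Proof.
by rewrite big_split_ord; congr (_ + _); apply: eq_bigr => j _;
  rewrite ?col_mxEu ?col_mxEd.
Qed.

Lemma uninhibitedP i :
  reflect (forall l, W (lshift k i) (rshift m l) = 0) (uninhibited i).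
Proof.
apply: (iffP eqP) => [/rowP row0 l | W0]; last by apply/rowP => l; rewrite !mxE.
by have := row0 l; rewrite !mxE.
Qed.

Lemma inhibition_lt0 i : ~~ uninhibited i ->
  \sum_l W (lshift k i) (rshift m l) < 0.
Proof.
move=> /uninhibitedP inh; rewrite lt_neqAle sumr_le0 // andbT.
apply: contra_notN inh => /eqP sum0 l; apply/eqP; rewrite -oppr_eq0; apply/eqP.
apply: (psumr_eq0P (P := xpredT) (F := fun l => - W (lshift k i) (rshift m l))).
- by move=> l' _; rewrite oppr_ge0.
- by rewrite sumrN sum0 oppr0.
- done.
Qed.

Lemma in_code_exc_code S :
  in_code W S <-> exc_code (ulsubmx W) uninhibited S.
Proof.
split=> [[b [x [b_ge0 x_ge0 fp_x ->]]] | [xE [xE_ge0 -> sub_xE]]].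
  have sub_x : subfixed W x by apply/fixed_point_subfixedP; last exists b.
  exists (usubmx x); split.
  - by move=> i; rewrite mxE.
  - by rewrite -{1}(vsubmxK x) supp_plus_col_mx.
  move=> i /uninhibitedP W0; have := sub_x (lshift k i).
  rewrite big_split_ord /= [X in _ + X]big1 ?addr0 => [|l _]; last by rewrite W0 mul0r.
  by move=> le_x; rewrite mxE; under eq_bigr do rewrite !mxE.
(* [M] beats the deficit of each inhibited excitatory unit and the
   excitatory drive of each inhibitory unit. *)
pose c i := \sum_l W (lshift k i) (rshift m l).
pose A i := \sum_j W (lshift k i) (lshift k j) * xE j 0.
pose f i := (xE i 0 - A i) / c i.
pose B l := \sum_j W (rshift m l) (lshift k j) * xE j 0.
pose M := \sum_i `|f i| + \sum_l `|B l|.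
have M_f i : f i <= M by rewrite (le_trans (le_sum_norm f i)) // lerDl sumr_ge0.
have M_B l : B l <= M by rewrite (le_trans (le_sum_norm B l)) // lerDr sumr_ge0.
have M_ge0 : 0 <= M by rewrite addr_ge0 ?sumr_ge0.
set x := col_mx xE (const_mx M : 'cV_k).
have x_ge0 : nonneg_vec x.
  by move=> v; rewrite -(splitK v); case: split => a; rewrite ?col_mxEu ?col_mxEd ?mxE.
have /(fixed_point_subfixedP _ x_ge0) [b b_ge0 fp_x] : subfixed W x.
  move=> v; rewrite sum_mul_col_mx -(splitK v); case: split => a /=.
    rewrite /x col_mxEu; under [X in _ + X]eq_bigr do rewrite mxE.
    rewrite -mulr_suml -/(c a) -/(A a).
    have [free_a | inh_a] := boolP (uninhibited a).
      have -> : c a = 0 by apply: big1 => l _; exact/(uninhibitedP _ free_a).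
      rewrite mul0r addr0.
      by have := sub_xE a free_a; under eq_bigr do rewrite !mxE.
    by apply: ler_add_nmulr (M_f a); exact: inhibition_lt0.
  rewrite /x col_mxEd mxE; under [X in _ + X]eq_bigr do rewrite mxE.
  rewrite -mulr_suml -/(B a).
  have : (\sum_l W (rshift m a) (rshift m l)) * M <= 0.
    by rewrite mulr_le0_ge0 // sumr_le0.
  by have := M_B a; lra.
by exists b, x; rewrite supp_plus_col_mx.
Qed.

End Code.

Arguments uninhibited {R m k} W i.
Arguments exc_code {R m} A P S.
Arguments in_code_exc_code {R m k W}.

Theorem mainTheorem3 (R : realType) (m k : nat) (W : 'M[R]_(m + k))
  (W' : 'M[R]_(m + 1)) :
  (0 < k)%N ->
  is_dale W (exc_set m k) ->
  ground_assumption W ->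
  is_dale W' (exc_set m 1) ->
  (forall i j : 'I_m, W' (lshift 1 i) (lshift 1 j) = W (lshift k i) (lshift k j)) ->
  (forall i : 'I_m, W' (lshift 1 i) (rshift m (ord0 : 'I_1)) < 0 <->
                    exists j : 'I_k, W (lshift k i) (rshift m j) != 0) ->
  (forall j : 'I_(m + 1), W' (rshift m (ord0 : 'I_1)) j = 0) ->
  ground_assumption W' ->
  forall S : {set 'I_m}, in_code W S <-> in_code W' S.
Proof.
move=> _ [_ _ W_inh] _ [_ _ W'_inh] W'_exc inh_iff _ _ S.
have W_le0 i l : W i (rshift m l) <= 0 by apply/W_inh/rshift_notin_exc_set.
have W'_le0 i l : W' i (rshift m l) <= 0 by apply/W'_inh/rshift_notin_exc_set.
have same_exc : ulsubmx W' = ulsubmx W by apply/matrixP => i j; rewrite !mxE W'_exc.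
have same_free : uninhibited W' =1 uninhibited W.
  move=> i; apply/idP/idP => /uninhibitedP W0; apply/uninhibitedP => l.
    apply/eqP/negPn/negP => W_ne0.
    by have := proj2 (inh_iff i) (ex_intro _ l W_ne0); rewrite W0 ltxx.
  rewrite (ord1 l); apply/eqP; rewrite eq_le W'_le0 leNgt /=.
  by apply/negP => /inh_iff [j]; rewrite W0 eqxx.
rewrite (in_code_exc_code W_le0) (in_code_exc_code W'_le0) same_exc.
split=> -[xE [? ? sub_xE]]; exists xE; split=> // i.
  by rewrite same_free; exact: sub_xE.
by rewrite -same_free; exact: sub_xE.
Qed.
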